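(* Let $d\ge 2$ and $\alpha\ge 1$ be integers and $G$ a finite graph. Then $K_{2+\alpha}\star G$ is $d$-ball packable if and only if $G$ is isomorphic to the tangency graph of a $(d-1,\alpha)$-kissing configuration.
   Context: A $(n,\alpha)$-kissing configuration is a packing of unit $n$-balls (in $\mathbb R^n$) each of which is tangent to each of $\alpha$ fixed pairwise tangent unit $n$-balls (the $\alpha$ fixed balls are not part of the configuration); its tangency graph has the balls of the configuration as vertices and tangent pairs as edges. $K_n$ is the complete graph; $G\star H$ is the join of graphs. A $d$-ball in $\hat{\mathbb R}^d$ is a closed ball, closed exterior of an open ball with $\infty$, or a closed half-space with $\infty$; a $d$-ball packing is a collection of $d$-balls with disjoint interiors; its tangency graph joins balls meeting in exactly one point; a graph is $d$-ball packable if isomorphic to the tangency graph of some $d$-ball packing. *)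

From Stdlib Require Import Reals.
From mathcomp Require Import all_boot.
Set Implicit Arguments. Unset Strict Implicit. Unset Printing Implicit Defensive.

Local Open Scope R_scope.

(* A point of R^n is a function nat -> R whose coordinates of index >= n vanish. *)
Definition pt := nat -> R.
Definition inR (n : nat) (x : pt) : Prop := forall i : nat, le n i -> x i = 0.

Fixpoint sumR (n : nat) (f : nat -> R) : R :=
  match n with O => 0 | S k => sumR k f + f k end.

Definition dot (n : nat) (x y : pt) : R := sumR n (fun i => x i * y i).
Definition dist2 (n : nat) (x y : pt) : R := sumR n (fun i => (x i - y i) * (x i - y i)).

(* ---------- d-balls in the one-point compactification \hat R^d = option pt
   (None = the point at infinity) ---------- *)
Inductive dball : Type :=
| DBall   (c : pt) (r : R)
| DCoBall (c : pt) (r : R)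
| DHalf   (a : pt) (b : R).

Definition valid_dball (d : nat) (B : dball) : Prop :=
  match B with
  | DBall c r => inR d c /\ 0 < r
  | DCoBall c r => inR d c /\ 0 < r
  | DHalf a b => inR d a /\ exists i, lt i d /\ a i <> 0
  end.

Definition in_dball (d : nat) (B : dball) (p : option pt) : Prop :=
  match B, p with
  | DBall c r, Some x => inR d x /\ dist2 d x c <= r * r
  | DBall _ _, None => False
  | DCoBall c r, Some x => inR d x /\ r * r <= dist2 d x c
  | DCoBall _ _, None => True
  | DHalf a b, Some x => inR d x /\ dot d a x <= b
  | DHalf _ _, None => True
  end.

(* topological interior in \hat R^d (oo is interior to a ball exterior,
   but lies on the boundary of a half-space) *)
Definition int_dball (d : nat) (B : dball) (p : option pt) : Prop :=
  match B, p with
  | DBall c r, Some x => inR d x /\ dist2 d x c < r * r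
  | DBall _ _, None => False
  | DCoBall c r, Some x => inR d x /\ r * r < dist2 d x c
  | DCoBall _ _, None => True
  | DHalf a b, Some x => inR d x /\ dot d a x < b
  | DHalf _ _, None => False
  end.

Definition dtangent (d : nat) (B1 B2 : dball) : Prop :=
  exists p, in_dball d B1 p /\ in_dball d B2 p /\
    forall q, in_dball d B1 q -> in_dball d B2 q -> q = p.

Definition dpacking (d : nat) (V : Type) (B : V -> dball) : Prop :=
  (forall v, valid_dball d (B v)) /\
  (forall u v, u <> v -> forall p, ~ (int_dball d (B u) p /\ int_dball d (B v) p)).

Definition ball_packable (d : nat) (V : Type) (adj : V -> V -> bool) : Prop :=
  exists B : V -> dball, dpacking d B /\
    forall u v, adj u v <-> (u <> v /\ dtangent d (B u) (B v)).

Definition in_ubal (n : nat) (c x : pt) : Prop := inR n x /\ dist2 n x c <= 1.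
Definition int_ubal (n : nat) (c x : pt) : Prop := inR n x /\ dist2 n x c < 1.
Definition utangent (n : nat) (c1 c2 : pt) : Prop :=
  exists x, in_ubal n c1 x /\ in_ubal n c2 x /\
    forall y, in_ubal n c1 y -> in_ubal n c2 y -> y = x.

Definition kissing_graph (n alpha : nat) (V : Type) (adj : V -> V -> bool) : Prop :=
  exists (F : nat -> pt) (C : V -> pt),
    (forall i, lt i alpha -> inR n (F i)) /\
    (forall i j, lt i alpha -> lt j alpha -> i <> j -> utangent n (F i) (F j)) /\
    (forall v, inR n (C v)) /\
    (forall u v, u <> v -> forall x, ~ (int_ubal n (C u) x /\ int_ubal n (C v) x)) /\
    (forall v i, lt i alpha -> utangent n (C v) (F i)) /\
    (forall u v, adj u v <-> (u <> v /\ utangent n (C u) (C v))).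

Definition join_adj (m : nat) (V : Type) (adj : V -> V -> bool)
  (x y : ('I_m + V)%type) : bool :=
  match x, y with
  | inl i, inl j => i != j
  | inr u, inr v => adj u v
  | _, _ => true
  end.

From Stdlib Require Import Reals Lra Psatz FunctionalExtensionality.
From mathcomp Require Import all_boot zify.
Set Implicit Arguments. Unset Strict Implicit. Unset Printing Implicit Defensive.
Local Open Scope R_scope.

(* Balls, ball exteriors and half-spaces of \hat R^d are encoded uniformly as
   generalized spheres {x | A|x|^2 - 2 x.v + C <= 0}; translations and the
   inversion in the unit sphere act on the coefficients and preserve tangency
   and disjointness of interiors.
   - Packing => kissing: in a packing of the join, the balls of two vertices of
     K_(2+alpha) are tangent; the Moebius map sending their contact point to
     infinity turns them into the two sides of a slab, and every other ball,
     being tangent to both, becomes a ball of one fixed radius centered on the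
     middle hyperplane of the slab.  A Householder chart identifies that
     hyperplane with R^(d-1), turning the balls of the remaining alpha clique
     vertices and of G into a (d-1, alpha)-kissing configuration.
   - Kissing => packing: place the configuration on R^(d-1) inside R^d and
     add the two half-spaces {x_(d-1) <= -1} and {x_(d-1) >= 1}. *)

Ltac sum_induction n := induction n as [|n IHn]; simpl; [ring | rewrite IHn; ring].

Lemma sumR_ext n f g : (forall i, lt i n -> f i = g i) -> sumR n f = sumR n g.
Proof.
  induction n as [|n IHn]; simpl; intros H; [reflexivity|].
  rewrite IHn ?H; auto; intros; apply H; lia.
Qed.

Lemma sumR_term n f i : (forall j, lt j n -> 0 <= f j) -> lt i n -> f i <= sumR n f.
Proof.
  induction n as [|n IHn]; simpl; intros H Hi; [lia|].
  assert (Hn : 0 <= f n) by (apply H; lia).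
  destruct (Nat.eq_dec i n) as [->|Hin].
  - enough (0 <= sumR n f) by lra.
    clear IHn Hi Hn; induction n as [|n IHn]; simpl; [lra|].
    assert (0 <= f n) by (apply H; lia). enough (0 <= sumR n f) by lra.
    apply IHn; intros; apply H; lia.
  - enough (f i <= sumR n f) by lra. apply IHn; [intros; apply H|]; lia.
Qed.

Lemma sumR_zero n : sumR n (fun _ => 0) = 0.
Proof. sum_induction n. Qed.

Lemma dot_sym n x y : dot n x y = dot n y x.
Proof. apply sumR_ext; intros; ring. Qed.

Lemma dot_ext n x y x' y' : (forall i, lt i n -> x i = x' i) -> (forall i, lt i n -> y i = y' i) ->
  dot n x y = dot n x' y'.
Proof. intros H1 H2; apply sumR_ext; intros; rewrite H1 ?H2; auto. Qed.

Lemma dot_scal n a x z : dot n (fun i => a * x i) z = a * dot n x z.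
Proof. unfold dot; sum_induction n. Qed.

Lemma dot_scalr n a x z : dot n z (fun i => a * x i) = a * dot n z x.
Proof. unfold dot; sum_induction n. Qed.

Lemma dot_add n x y z : dot n (fun i => x i + y i) z = dot n x z + dot n y z.
Proof. unfold dot; sum_induction n. Qed.

Lemma dot_sub n x y z : dot n (fun i => x i - y i) z = dot n x z - dot n y z.
Proof. unfold dot; sum_induction n. Qed.

Lemma dot_lin n a b x y z : dot n (fun i => a * x i + b * y i) z = a * dot n x z + b * dot n y z.
Proof. unfold dot; sum_induction n. Qed.

Lemma dot_shift n x y w a b : dot n (fun i => x i - a * w i) (fun i => y i - b * w i)
  = dot n x y - b * dot n x w - a * dot n w y + a * b * dot n w w.
Proof. unfold dot; sum_induction n. Qed.

Lemma dot_sub_scalr n x y z b : dot n x (fun i => y i - b * z i) = dot n x y - b * dot n x z.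
Proof. unfold dot; sum_induction n. Qed.

Lemma dot_propr n z x y k : (forall i, lt i n -> y i = k * x i) -> dot n z y = k * dot n z x.
Proof. intros H. rewrite -dot_scalr. apply dot_ext; auto. Qed.

Lemma dot_propl n z x y k : (forall i, lt i n -> y i = k * x i) -> dot n y z = k * dot n x z.
Proof. intros H. rewrite -dot_scal. apply dot_ext; auto. Qed.

Lemma dot_self_nonneg n x : 0 <= dot n x x.
Proof.
  induction n as [|n IHn]; unfold dot in *; simpl; [lra|].
  pose proof (Rle_0_sqr (x n)); unfold Rsqr in *; lra.
Qed.

Lemma dot_self_zero n x : dot n x x <= 0 -> forall i, lt i n -> x i = 0.
Proof.
  intros H i Hi.
  assert (x i * x i <= dot n x x) by (apply (@sumR_term n (fun i => x i * x i) i); auto; intros; nra).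
  nra.
Qed.

Lemma dot_self_pos n x i : lt i n -> x i <> 0 -> 0 < dot n x x.
Proof.
  intros Hi Hx.
  assert (x i * x i <= dot n x x) by (apply (@sumR_term n (fun i => x i * x i) i); auto; intros; nra).
  assert (0 < x i * x i) by (destruct (Rlt_or_le (x i) 0); nra). lra.
Qed.

Lemma dist2_dot n x c : dist2 n x c = dot n x x - 2 * dot n x c + dot n c c.
Proof. unfold dist2, dot; sum_induction n. Qed.

Lemma dist2_nonneg n x y : 0 <= dist2 n x y.
Proof. apply dot_self_nonneg. Qed.

Lemma dist2_sym n x y : dist2 n x y = dist2 n y x.
Proof. apply sumR_ext; intros; ring. Qed.

Lemma dist2_self n y : dist2 n y y = 0.
Proof. unfold dist2; sum_induction n. Qed.

Lemma dist2_line n c t w : dist2 n (fun i => c i + t * w i) c = t * t * dot n w w.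
Proof. unfold dist2, dot; sum_induction n. Qed.

Lemma lagrange n x y :
  dot n (fun i => dot n x x * y i - dot n x y * x i) (fun i => dot n x x * y i - dot n x y * x i)
  = dot n x x * (dot n x x * dot n y y - dot n x y * dot n x y).
Proof.
  assert (E : forall a b, dot n (fun i => a * y i - b * x i) (fun i => a * y i - b * x i)
     = a * a * dot n y y - 2 * a * b * dot n x y + b * b * dot n x x)
    by (intros a b; unfold dot; sum_induction n).
  rewrite E. ring.
Qed.

Lemma cauchy_schwarz n x y : dot n x y * dot n x y <= dot n x x * dot n y y.
Proof.
  destruct (Rle_lt_or_eq_dec _ _ (dot_self_nonneg n x)) as [Hpos|Hzero].
  - pose proof (dot_self_nonneg n (fun i => dot n x x * y i - dot n x y * x i)) as H.
    rewrite lagrange in H. nra.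
  - assert (Hxy : dot n x y = 0).
    { rewrite (@dot_propl n y x x 0); [ring|].
      intros i Hi; rewrite (@dot_self_zero n x) //; lra. }
    rewrite Hxy -Hzero; lra.
Qed.

Lemma inR_ext n (x y : pt) : inR n x -> inR n y -> (forall i, lt i n -> x i = y i) -> x = y.
Proof.
  intros Hx Hy H. apply functional_extensionality; intros i.
  destruct (Nat.lt_ge_cases i n) as [Hi|Hi]; [auto | rewrite Hx ?Hy; auto].
Qed.

Lemma inR_S n x : inR n x -> inR (S n) x.
Proof. intros H i Hi; apply H; lia. Qed.

(* A generalized sphere of R^d is described by a quadratic function
   f(x) = A |x|^2 - 2 x.v + C.  Its closed "ball" is {f <= 0}, completed by the
   point at infinity when A <= 0; the interior is {f < 0}, with infinity when
   A < 0.  It is nondegenerate when |v|^2 - A C > 0.  Balls (A > 0), ball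
   exteriors (A < 0) and half-spaces (A = 0) are treated uniformly, and the
   Moebius group acts linearly on the coefficients (A, v, C). *)
Record gsphere := GSphere { gA : R; gv : pt; gC : R }.

Definition gform d (s : gsphere) (x : pt) : R := gA s * dot d x x - 2 * dot d x (gv s) + gC s.

Definition gin d s (p : option pt) : Prop :=
  match p with None => gA s <= 0 | Some x => inR d x /\ gform d s x <= 0 end.
Definition gint d s (p : option pt) : Prop :=
  match p with None => gA s < 0 | Some x => inR d x /\ gform d s x < 0 end.

Definition gvalid d s : Prop := inR d (gv s) /\ 0 < dot d (gv s) (gv s) - gA s * gC s.
Definition gtangent d s1 s2 : Prop :=
  exists p, gin d s1 p /\ gin d s2 p /\ forall q, gin d s1 q -> gin d s2 q -> q = p.
Definition gdisjoint d s1 s2 : Prop := forall p, ~ (gint d s1 p /\ gint d s2 p).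

Lemma gdisjoint_sym d s1 s2 : gdisjoint d s1 s2 -> gdisjoint d s2 s1.
Proof. intros H p [H1 H2]; apply (H p); auto. Qed.

Definition gsphere_of d (B : dball) : gsphere :=
  match B with
  | DBall c r => GSphere 1 c (dot d c c - r * r)
  | DCoBall c r => GSphere (-1) (fun i => - c i) (r * r - dot d c c)
  | DHalf a b => GSphere 0 (fun i => - a i / 2) (- b)
  end.

Lemma gsphere_of_sets d B p :
  (in_dball d B p <-> gin d (gsphere_of d B) p) /\ (int_dball d B p <-> gint d (gsphere_of d B) p).
Proof.
  destruct B as [c r|c r|a b]; destruct p as [x|]; simpl; unfold gform; simpl;
    try (split; split; intros; lra).
  - rewrite dist2_dot. split; split; intros [H1 H2]; split; auto; lra.
  - rewrite dist2_dot (@dot_propr d x c (fun i => - c i) (-1)); [|intros; ring].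
    split; split; intros [H1 H2]; split; auto; lra.
  - rewrite (@dot_propr d x a (fun i => - a i / 2) (-1/2)); [|intros; field].
    rewrite (dot_sym d a x). split; split; intros [H1 H2]; split; auto; lra.
Qed.

Lemma gsphere_of_valid d B : valid_dball d B -> gvalid d (gsphere_of d B).
Proof.
  unfold gvalid; destruct B as [c r|c r|a b]; simpl.
  - intros [Hc Hr]; split; auto; nra.
  - intros [Hc Hr]; split; [intros i Hi; rewrite Hc; auto; ring|].
    rewrite (@dot_propr d _ c (fun i => - c i) (-1)); [|intros; ring].
    rewrite (@dot_propl d c c (fun i => - c i) (-1)); [|intros; ring]. nra.
  - intros [Ha [i [Hi Hai]]]; split; [intros j Hj; rewrite Ha; auto; lra|].
    rewrite (@dot_propr d _ a (fun i => - a i / 2) (-1/2)); [|intros; field].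
    rewrite (@dot_propl d a a (fun i => - a i / 2) (-1/2)); [|intros; field].
    pose proof (dot_self_pos Hi Hai). nra.
Qed.

Lemma gsphere_of_tangent d B1 B2 : dtangent d B1 B2 <-> gtangent d (gsphere_of d B1) (gsphere_of d B2).
Proof.
  pose proof (fun p => proj1 (gsphere_of_sets d B1 p)) as S1.
  pose proof (fun p => proj1 (gsphere_of_sets d B2 p)) as S2.
  split; intros [p [H1 [H2 U]]]; exists p.
  - rewrite -S1 -S2; repeat split; auto. intros q; rewrite -S1 -S2; auto.
  - rewrite S1 S2; repeat split; auto. intros q; rewrite S1 S2; auto.
Qed.

Lemma gsphere_of_disjoint d B1 B2 :
  (forall p, ~ (int_dball d B1 p /\ int_dball d B2 p)) <-> gdisjoint d (gsphere_of d B1) (gsphere_of d B2).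
Proof.
  pose proof (fun p => proj2 (gsphere_of_sets d B1 p)) as S1.
  pose proof (fun p => proj2 (gsphere_of_sets d B2 p)) as S2.
  split; intros H p; [rewrite -S1 -S2 | rewrite S1 S2]; apply H.
Qed.

Definition vpt d (p : option pt) : Prop := match p with None => True | Some x => inR d x end.

Lemma gin_vpt d s p : gin d s p -> vpt d p.
Proof. destruct p; simpl; tauto. Qed.

Lemma gint_vpt d s p : gint d s p -> vpt d p.
Proof. destruct p; simpl; tauto. Qed.

Definition sphere_map d (T : gsphere -> gsphere) (phi psi : option pt -> option pt) : Prop :=
  (forall p, vpt d p -> vpt d (phi p) /\ vpt d (psi p) /\ psi (phi p) = p /\ phi (psi p) = p) /\
  (forall s p, vpt d p -> (gin d (T s) (phi p) <-> gin d s p) /\ (gint d (T s) (phi p) <-> gint d s p)).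

Lemma sphere_map_comp d T phi psi T' phi' psi' :
  sphere_map d T phi psi -> sphere_map d T' phi' psi' ->
  sphere_map d (fun s => T' (T s)) (fun p => phi' (phi p)) (fun p => psi (psi' p)).
Proof.
  intros [B1 M1] [B2 M2]. split.
  - intros p Hp. destruct (B1 p Hp) as [V1 [W1 [E1 F1]]].
    destruct (B2 _ V1) as [_ [_ [E2 _]]]. destruct (B2 p Hp) as [_ [W2 [_ F2]]].
    destruct (B1 _ W2) as [_ [W3 [_ F3]]].
    repeat split; try apply B2; auto; [rewrite E2 | rewrite F3]; auto.
  - intros s p Hp. destruct (B1 p Hp) as [V1 _].
    destruct (M2 (T s) _ V1) as [I1 I2]. destruct (M1 s p Hp) as [J1 J2].
    rewrite I1 I2; auto.
Qed.

Lemma sphere_map_preserves d T phi psi : sphere_map d T phi psi -> forall s1 s2,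
  (gtangent d (T s1) (T s2) <-> gtangent d s1 s2) /\ (gdisjoint d (T s1) (T s2) <-> gdisjoint d s1 s2).
Proof.
  intros [Hb Hm] s1 s2. unfold gtangent, gdisjoint. split; split.
  - intros [p [H1 [H2 U]]].
    destruct (Hb p (gin_vpt H1)) as [_ [Vq [_ E]]].
    exists (psi p). rewrite -E in H1 H2.
    split; [apply (Hm s1 _ Vq); auto|]. split; [apply (Hm s2 _ Vq); auto|].
    intros q Q1 Q2. assert (Vr := gin_vpt Q1). destruct (Hb q Vr) as [_ [_ [E2 _]]].
    rewrite -E2. f_equal. apply U; [apply (Hm s1 _ Vr) | apply (Hm s2 _ Vr)]; auto.
  - intros [p [H1 [H2 U]]]. assert (Vp := gin_vpt H1).
    exists (phi p). split; [apply (Hm s1 _ Vp); auto|]. split; [apply (Hm s2 _ Vp); auto|].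
    intros q Q1 Q2. destruct (Hb q (gin_vpt Q1)) as [_ [Vq [_ E2]]].
    rewrite -E2 in Q1 Q2 *. f_equal. apply U; [apply (Hm s1 _ Vq) | apply (Hm s2 _ Vq)]; auto.
  - intros H p [H1 H2]. assert (Vp := gint_vpt H1). apply (H (phi p)).
    split; [apply (Hm s1 _ Vp) | apply (Hm s2 _ Vp)]; auto.
  - intros H p [H1 H2]. destruct (Hb p (gint_vpt H1)) as [_ [Vq [_ E]]].
    apply (H (psi p)). rewrite -E in H1 H2.
    split; [apply (Hm s1 _ Vq) | apply (Hm s2 _ Vq)]; auto.
Qed.

(* Translation by -q: the sphere {f <= 0} becomes {x | f(x + q) <= 0}. *)
Definition translate d (q : pt) (s : gsphere) : gsphere :=
  GSphere (gA s) (fun i => gv s i - gA s * q i) (gform d s q).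
Definition shift_pt (q : pt) (p : option pt) : option pt :=
  match p with None => None | Some x => Some (fun i => x i + q i) end.

Lemma gform_translate d q s x : gform d (translate d q s) (fun i => x i - q i) = gform d s x.
Proof.
  unfold gform, translate; simpl.
  assert (E : forall a v, dot d (fun i => x i - q i) (fun i => v i - a * q i)
             = dot d x v - a * dot d x q - dot d q v + a * dot d q q)
    by (intros a v; unfold dot; sum_induction d).
  assert (Ex : dot d (fun i => x i - q i) (fun i => x i - q i) = dot d x x - 2 * dot d x q + dot d q q)
    by (rewrite -dist2_dot; reflexivity).
  rewrite Ex E. unfold gform. ring.
Qed.

Lemma translate_sphere_map d q : inR d q ->
  sphere_map d (translate d q) (shift_pt (fun i => - q i)) (shift_pt q).
Proof.
  intros Hq. split.
  - intros [x|] Hx; simpl in *; [|tauto]. repeat split.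
    + intros i Hi; rewrite Hx ?Hq; auto; ring.
    + intros i Hi; rewrite Hx ?Hq; auto; ring.
    + f_equal; apply functional_extensionality; intros; ring.
    + f_equal; apply functional_extensionality; intros; ring.
  - intros s [x|] Hx; simpl in *; [|tauto].
    assert (Hxq : inR d (fun i => x i + - q i)) by (intros i Hi; rewrite Hx ?Hq; auto; ring).
    pose proof (gform_translate d q s x) as E.
    replace (fun i => x i + - q i) with (fun i => x i - q i) in * by
      (apply functional_extensionality; intros; ring).
    rewrite E. tauto.
Qed.

Lemma translate_valid d q s : inR d q -> gvalid d s -> gvalid d (translate d q s).
Proof.
  intros Hq [Hv H]. split; simpl.
  - intros i Hi; rewrite Hv ?Hq; auto; ring.
  - unfold gform. rewrite (dot_shift d (gv s) (gv s) q (gA s) (gA s)) (dot_sym d q (gv s)). nra.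
Qed.

(* Inversion in the unit sphere exchanges 0 and infinity and swaps A and C. *)
Definition origin : pt := fun _ => 0.
Definition invert (s : gsphere) : gsphere := GSphere (gC s) (gv s) (gA s).
Definition invert_pt d (p : option pt) : option pt :=
  match p with
  | None => Some origin
  | Some x => if Req_EM_T (dot d x x) 0 then None else Some (fun i => / dot d x x * x i)
  end.

Lemma dot_origin d y : dot d origin y = 0.
Proof. unfold dot, origin; sum_induction d. Qed.

Lemma origin_of_norm0 d x : inR d x -> dot d x x = 0 -> x = origin.
Proof.
  intros Hx H. apply inR_ext with d; auto; [intros i _; reflexivity|].
  intros i Hi; apply (@dot_self_zero d x); auto; lra.
Qed.

Lemma gform_invert d s x : dot d x x <> 0 ->
  gform d (invert s) (fun i => / dot d x x * x i) = / dot d x x * gform d s x.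
Proof.
  intros Hx. unfold invert, gform; simpl. rewrite !dot_scal !dot_scalr. unfold gform. field. auto.
Qed.

Lemma invert_pt_involutive d p : vpt d p -> vpt d (invert_pt d p) /\ invert_pt d (invert_pt d p) = p.
Proof.
  destruct p as [x|]; simpl; intros Hx.
  - destruct (Req_EM_T (dot d x x) 0) as [E|E]; simpl.
    + split; auto. f_equal. symmetry; apply (@origin_of_norm0 d); auto.
    + split; [intros i Hi; rewrite Hx; auto; ring|].
      rewrite dot_scal dot_scalr.
      replace (/ dot d x x * (/ dot d x x * dot d x x)) with (/ dot d x x) by (field; auto).
      destruct (Req_EM_T _ 0) as [E2|E2]; simpl; [exfalso; exact (Rinv_neq_0_compat _ E E2)|].
      f_equal; apply functional_extensionality; intros i. field. auto.
  - split; [intros i _; reflexivity|]. rewrite dot_origin. destruct (Req_EM_T 0 0); [auto|lra].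
Qed.

Lemma invert_sphere_map d : sphere_map d invert (invert_pt d) (invert_pt d).
Proof.
  assert (Horigin : inR d origin) by (intros i _; reflexivity).
  split.
  - intros p Hp; destruct (invert_pt_involutive Hp); tauto.
  - intros s [x|] Hx; simpl in *.
    + destruct (Req_EM_T (dot d x x) 0) as [E|E]; simpl.
      * rewrite (origin_of_norm0 Hx E). unfold gform; rewrite !dot_origin.
        split; split; intros H; try split; try tauto; lra.
      * assert (Hn : 0 < / dot d x x).
        { apply Rinv_0_lt_compat. destruct (dot_self_nonneg d x) as [Hp|Hp]; [exact Hp|].
          exfalso; apply E; symmetry; exact Hp. }
        assert (Hix : inR d (fun i => / dot d x x * x i)) by (intros i Hi; rewrite Hx; auto; ring).
        rewrite gform_invert //. split; split; intros [_ H]; split; auto; nra.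
    + unfold gform; simpl. rewrite !dot_origin. split; split; intros H; try split; auto; lra.
Qed.

Lemma invert_valid d s : gvalid d s -> gvalid d (invert s).
Proof. intros [H1 H2]; split; simpl; auto; lra. Qed.

(* The Moebius transformation sending the point p of \hat R^d to infinity. *)
Definition to_infinity d (p : option pt) (s : gsphere) : gsphere :=
  match p with None => s | Some q => invert (translate d q s) end.

Lemma to_infinity_preserves d p : vpt d p -> forall s1 s2,
  (gtangent d (to_infinity d p s1) (to_infinity d p s2) <-> gtangent d s1 s2) /\
  (gdisjoint d (to_infinity d p s1) (to_infinity d p s2) <-> gdisjoint d s1 s2).
Proof.
  destruct p as [q|]; simpl; intros Hq; [|tauto].
  exact (sphere_map_preserves (sphere_map_comp (translate_sphere_map Hq) (invert_sphere_map d))).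
Qed.

Lemma to_infinity_valid d p s : vpt d p -> gvalid d s -> gvalid d (to_infinity d p s).
Proof. destruct p; simpl; intros; auto. apply invert_valid, translate_valid; auto. Qed.

Lemma to_infinity_through d p s : gin d s p -> gin d (to_infinity d p s) None.
Proof. destruct p as [q|]; simpl; [intros [_ H]; exact H | auto]. Qed.

Lemma quadratic_eventually_neg a b c : a < 0 \/ (a = 0 /\ 0 < b) ->
  exists T, forall t, T <= t -> a * t * t - 2 * b * t + c < 0.
Proof.
  pose proof (Rle_abs b). pose proof (Rle_abs (- b)). rewrite Rabs_Ropp in H0.
  pose proof (Rle_abs c). pose proof (Rabs_pos b). pose proof (Rabs_pos c).
  intros [Ha|[Ha Hb]].
  - set (K := 2 * Rabs b + Rabs c + 1).
    exists (1 + K / (- a)). intros t Ht.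
    assert (E : (- a) * (K / (- a)) = K) by (field; lra).
    assert (Hq : 0 < K / (- a)) by (apply Rdiv_lt_0_compat; unfold K; lra).
    assert (Hat : a * t <= - K) by nra.
    assert (X : 0 <= - (a * t - 2 * b) - Rabs c - 1) by (unfold K in Hat; lra).
    assert (0 <= (t - 1) * (- (a * t - 2 * b))) by (apply Rmult_le_pos; lra).
    nra.
  - subst a. exists ((Rabs c + 1) / (2 * b)). intros t Ht.
    assert (E : (2 * b) * ((Rabs c + 1) / (2 * b)) = Rabs c + 1) by (field; lra).
    assert (2 * b * t >= Rabs c + 1) by nra. lra.
Qed.

(* s is unbounded in the direction w: the ray t w eventually enters its interior. *)
Definition recedes_along d (w : pt) (s : gsphere) : Prop :=
  gA s * dot d w w < 0 \/ (gA s * dot d w w = 0 /\ 0 < dot d w (gv s)).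

Lemma gform_ray d s w t : gform d s (fun i => t * w i) = (gA s * dot d w w) * t * t - 2 * dot d w (gv s) * t + gC s.
Proof. unfold gform. rewrite !dot_scal !dot_scalr. ring. Qed.

Lemma common_recession_meets d w s1 s2 : inR d w -> recedes_along d w s1 -> recedes_along d w s2 ->
  exists x, gint d s1 (Some x) /\ gint d s2 (Some x).
Proof.
  intros Hw H1 H2.
  destruct (quadratic_eventually_neg (gC s1) H1) as [T1 HT1].
  destruct (quadratic_eventually_neg (gC s2) H2) as [T2 HT2].
  set (t := Rmax T1 T2). exists (fun i => t * w i).
  assert (inR d (fun i => t * w i)) by (intros i Hi; rewrite Hw; auto; ring).
  simpl; rewrite !gform_ray. split; split; auto;
    [apply HT1, Rmax_l | apply HT2, Rmax_r].
Qed.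

Definition e0 : pt := fun i => if Nat.eqb i 0 then 1 else 0.

Lemma e0_inR d : (1 <= d)%coq_nat -> inR d e0.
Proof. intros Hd i Hi. unfold e0. destruct (Nat.eqb_spec i 0); [lia|auto]. Qed.

Lemma e0_pos d : (1 <= d)%coq_nat -> 0 < dot d e0 e0.
Proof. intros Hd. apply (@dot_self_pos d e0 0); [lia | unfold e0; simpl; lra]. Qed.

Lemma exterior_meets d s1 s2 : (1 <= d)%coq_nat -> gvalid d s2 -> gA s1 < 0 -> gA s2 <= 0 ->
  exists x, gint d s1 (Some x) /\ gint d s2 (Some x).
Proof.
  intros Hd [V2 P2] A1 A2. destruct (Rle_lt_or_eq_dec _ _ A2) as [A2'|A2'].
  - apply (@common_recession_meets d e0); [apply e0_inR; auto| |];
      left; pose proof (e0_pos Hd); nra.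
  - rewrite A2' in P2. apply (@common_recession_meets d (gv s2)); auto.
    + left; nra.
    + right. rewrite A2'. split; [ring | nra].
Qed.

Lemma disjoint_halfspaces_opposite d s1 s2 : gvalid d s1 -> gvalid d s2 -> gA s1 = 0 -> gA s2 = 0 ->
  gdisjoint d s1 s2 -> exists mu, 0 < mu /\ forall i, gv s2 i = - mu * gv s1 i.
Proof.
  intros [V1 P1] [V2 P2] A1 A2 Hdis.
  rewrite A1 in P1; rewrite A2 in P2.
  set (v1 := gv s1) in *; set (v2 := gv s2) in *.
  set (n1 := dot d v1 v1) in *; set (n2 := dot d v2 v2) in *; set (g := dot d v1 v2).
  assert (Pn1 : 0 < n1) by lra. assert (Pn2 : 0 < n2) by lra.
  assert (CS := cauchy_schwarz d v1 v2). fold n1 n2 g in CS.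
  (* if v1, v2 were not parallel, both half-spaces would recede along x *)
  assert (Parallel : n1 * n2 - g * g = 0).
  { destruct (Rle_lt_or_eq_dec _ _ CS) as [Hlt|Heq]; [exfalso|lra].
    set (x := fun i => (n2 - g) * v1 i + (n1 - g) * v2 i).
    assert (Ex : inR d x) by (intros i Hi; unfold x; rewrite V1 ?V2; auto; ring).
    assert (X1 : dot d x v1 = n1 * n2 - g * g).
    { unfold x; rewrite dot_lin (dot_sym d v2 v1). fold n1 g. ring. }
    assert (X2 : dot d x v2 = n1 * n2 - g * g) by (unfold x; rewrite dot_lin; fold n2 g; ring).
    destruct (@common_recession_meets d x s1 s2 Ex) as [y Y].
    - right. rewrite A1. split; [ring | rewrite X1; lra].
    - right. rewrite A2. split; [ring | rewrite X2; lra].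
    - exact (Hdis (Some y) Y). }
  assert (Gneg : g < 0).
  { destruct (Rlt_or_le g 0) as [Hg|Hg]; auto. exfalso.
    assert (g <> 0) by nra.
    destruct (@common_recession_meets d v1 s1 s2 V1) as [y Y].
    - right. rewrite A1. split; [ring | fold v1 n1; lra].
    - right. rewrite A2. split; [ring | fold v1 v2 g; lra].
    - exact (Hdis (Some y) Y). }
  assert (Lg := lagrange d v1 v2). fold n1 n2 g in Lg. rewrite Parallel Rmult_0_r in Lg.
  assert (Hz : forall i, lt i d -> n1 * v2 i - g * v1 i = 0)
    by (intros i Hi; apply (@dot_self_zero d (fun i => n1 * v2 i - g * v1 i)); auto; lra).
  exists (- g / n1). split; [apply Rdiv_lt_0_compat; lra|].
  intros i. destruct (Nat.lt_ge_cases i d) as [Hi|Hi].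
  - pose proof (Hz i Hi). field_simplify; [|lra]. apply (Rmult_eq_reg_l n1); [|lra].
    field_simplify; lra.
  - rewrite V1 ?V2; auto. ring.
Qed.

Lemma disjoint_through_infinity d s0 s1 : (1 <= d)%coq_nat -> gvalid d s0 -> gvalid d s1 ->
  gA s0 <= 0 -> gA s1 <= 0 -> gdisjoint d s0 s1 ->
  gA s0 = 0 /\ gA s1 = 0 /\ exists mu, 0 < mu /\ forall i, gv s1 i = - mu * gv s0 i.
Proof.
  intros Hd V0 V1 A0 A1 D.
  assert (E0 : gA s0 = 0).
  { destruct (Rle_lt_or_eq_dec _ _ A0) as [Hl|]; auto. exfalso.
    destruct (exterior_meets Hd V1 Hl A1) as [x X]. exact (D (Some x) X). }
  assert (E1 : gA s1 = 0).
  { destruct (Rle_lt_or_eq_dec _ _ A1) as [Hl|]; auto. exfalso.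
    destruct (exterior_meets Hd V0 Hl A0) as [x [X1 X2]]. exact (D (Some x) (conj X2 X1)). }
  repeat split; auto. exact (disjoint_halfspaces_opposite V0 V1 E0 E1 D).
Qed.

Definition gcenter (s : gsphere) : pt := fun i => / gA s * gv s i.
Definition gradius2 d (s : gsphere) : R := (dot d (gv s) (gv s) - gA s * gC s) / (gA s * gA s).

Lemma gform_ball d s x : gA s <> 0 -> gform d s x = gA s * (dist2 d x (gcenter s) - gradius2 d s).
Proof. intros HA. rewrite dist2_dot. unfold gcenter, gradius2, gform. rewrite dot_scalr dot_scal dot_scalr. field; auto. Qed.

Lemma gcenter_inR d s : inR d (gv s) -> inR d (gcenter s).
Proof. intros H i Hi; unfold gcenter; rewrite H; auto; ring. Qed.

Lemma gradius2_pos d s : gvalid d s -> gA s <> 0 -> 0 < gradius2 d s.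
Proof. intros [_ H] HA. unfold gradius2. apply Rdiv_lt_0_compat; auto. nra. Qed.

(* A ball s and a half-space h = {C - 2 x.v0 <= 0}: with c the center and r
   the squared radius of s, the signed quantity hh = C - 2 c.v0 measures the
   distance from c to the boundary of h (in units of |v0|/2). *)
Section BallAndHalfspace.
Variables (d : nat) (s h : gsphere).
Hypotheses (Vs : gvalid d s) (Vh : gvalid d h) (As : 0 < gA s) (Ah : gA h = 0).

Let c := gcenter s.
Let r := gradius2 d s.
Let n0 := dot d (gv h) (gv h).
Let hh := gC h - 2 * dot d c (gv h).

Let n0_pos : 0 < n0.
Proof. destruct Vh as [_ P]. rewrite Ah in P. unfold n0; lra. Qed.

Let r_pos : 0 < r.
Proof. apply gradius2_pos; auto; lra. Qed.

Lemma ball_halfspace_disjoint : gdisjoint d s h -> 0 < hh /\ 4 * r * n0 <= hh * hh.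
Proof.
  intros Hdis.
  set (k := sqrt (r * n0)).
  assert (Hk : k * k = r * n0) by (apply sqrt_sqrt; nra).
  assert (Kp : 0 < k) by (apply sqrt_lt_R0; nra).
  destruct (Rlt_or_le hh (2 * k)) as [Hlt|Hge]; [exfalso | split; nra].
  (* otherwise the point c + t v0 lies in both interiors for a suitable t > 0 *)
  set (m := Rmax hh (- k)).
  assert (M1 : hh <= m) by apply Rmax_l. assert (M2 : - k <= m) by apply Rmax_r.
  assert (M3 : m < 2 * k) by (unfold m; apply Rmax_lub_lt; lra).
  set (t := (m + 2 * k) / (4 * n0)).
  assert (Tn : t * n0 = (m + 2 * k) / 4) by (unfold t; field; lra).
  assert (Tp : 0 < t) by (unfold t; apply Rdiv_lt_0_compat; lra).
  set (x := fun i => c i + t * gv h i).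
  apply (Hdis (Some x)).
  assert (Ic : inR d c) by exact (gcenter_inR (proj1 Vs)).
  assert (Ex : inR d x) by (intros i Hi; unfold x; rewrite Ic ?(proj1 Vh); auto; ring).
  split; split; auto.
  - rewrite gform_ball; [|lra]. fold c r. unfold x. rewrite dist2_line. fold n0.
    assert (t * n0 * (t * n0) < r * n0) by nra.
    assert (t * t * n0 < r) by nra. nra.
  - unfold gform. rewrite Ah Rmult_0_l. unfold x. rewrite dot_add dot_scal. fold n0.
    assert (hh < 2 * (t * n0)) by lra. unfold hh in H. nra.
Qed.

Lemma ball_halfspace_common_point p : gin d s p -> gin d h p -> 0 < hh -> hh * hh <= 4 * r * n0.
Proof.
  intros Hs Hh Hpos.
  destruct p as [x|]; [|simpl in Hs; lra].
  destruct Hs as [Ex F1]. destruct Hh as [_ F2].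
  rewrite gform_ball in F1; [|lra]. fold c r in F1.
  unfold gform in F2. rewrite Ah in F2.
  assert (Dz : dist2 d x c <= r) by nra.
  set (z := fun i => x i - c i).
  assert (Z1 : dist2 d x c = dot d z z) by reflexivity.
  assert (Z2 : dot d z (gv h) = dot d x (gv h) - dot d c (gv h)) by (unfold z; apply dot_sub).
  assert (CS := cauchy_schwarz d z (gv h)). fold n0 in CS.
  assert (2 * dot d z (gv h) >= hh) by (unfold hh; lra).
  assert (hh * hh <= 4 * (dot d z (gv h) * dot d z (gv h))) by nra.
  assert (dot d z z * n0 <= r * n0) by nra.
  lra.
Qed.

Lemma ball_halfspace_tangent : gdisjoint d s h -> gtangent d s h -> 0 < hh /\ hh * hh = 4 * r * n0.
Proof.
  intros Hdis [p [Ps [Ph _]]].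
  destruct (ball_halfspace_disjoint Hdis) as [H1 H2].
  pose proof (ball_halfspace_common_point Ps Ph H1). split; lra.
Qed.

End BallAndHalfspace.

(* Two half-spaces s0 = {C0 - 2 x.v0 <= 0} and s1 = {C1 + 2 mu x.v0 <= 0} with
   opposite normals bound a slab; a sphere tangent to both with disjoint
   interiors is a ball inscribed in the slab, so its center lies on the middle
   hyperplane {x.v0 = slab_level} and its squared radius is slab_radius2. *)
Section Slab.
Variables (d : nat) (s0 s1 : gsphere) (mu : R).
Hypotheses (V0 : gvalid d s0) (V1 : gvalid d s1) (A0 : gA s0 = 0) (A1 : gA s1 = 0)
  (Mu : 0 < mu) (Hv : forall i, gv s1 i = - mu * gv s0 i).

Definition slab_level : R := (mu * gC s0 - gC s1) / (4 * mu).
Definition slab_radius2 : R :=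
  (gC s0 - 2 * slab_level) * (gC s0 - 2 * slab_level) / (4 * dot d (gv s0) (gv s0)).

Let n0_pos : 0 < dot d (gv s0) (gv s0).
Proof. destruct V0 as [_ P]. rewrite A0 in P. lra. Qed.

Lemma inside_slab_is_ball s : (1 <= d)%coq_nat -> gvalid d s ->
  gdisjoint d s s0 -> gdisjoint d s s1 -> 0 < gA s.
Proof.
  intros Hd Vs D0 D1.
  destruct (Rlt_le_dec 0 (gA s)) as [H|H]; auto. exfalso.
  destruct (Rle_lt_or_eq_dec _ _ H) as [Hl|Heq].
  - destruct (exterior_meets Hd V0 Hl (Req_le _ _ A0)) as [x X]. exact (D0 (Some x) X).
  - destruct (disjoint_halfspaces_opposite V0 Vs A0 Heq (gdisjoint_sym D0)) as [l [Hl Hl']].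
    destruct (disjoint_halfspaces_opposite V1 Vs A1 Heq (gdisjoint_sym D1)) as [l' [Hl2 Hl2']].
    (* v0 and v1 = - mu v0 would both be negative multiples of the normal of s *)
    assert (Z : forall i, lt i d -> gv s0 i = 0).
    { intros i _. pose proof (Hl' i). pose proof (Hl2' i). rewrite Hv in H1.
      assert ((l + l' * mu) * gv s0 i = 0) by nra.
      assert (0 < l + l' * mu) by nra. nra. }
    assert (dot d (gv s0) (gv s0) = 0).
    { rewrite (@dot_propl d (gv s0) (gv s0) (gv s0) 0); [ring|]. intros i Hi; rewrite Z; auto; ring. }
    lra.
Qed.

Lemma inside_slab_ball s : (1 <= d)%coq_nat -> gvalid d s ->
  gdisjoint d s s0 -> gdisjoint d s s1 -> gtangent d s s0 -> gtangent d s s1 ->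
  0 < gA s /\ dot d (gcenter s) (gv s0) = slab_level /\ gradius2 d s = slab_radius2.
Proof.
  intros Hd Vs D0 D1 T0 T1.
  assert (Apos := inside_slab_is_ball Hd Vs D0 D1).
  destruct (ball_halfspace_tangent Vs V0 Apos A0 D0 T0) as [H0a H0b].
  destruct (ball_halfspace_tangent Vs V1 Apos A1 D1 T1) as [H1a H1b].
  set (c := gcenter s) in *. set (v0 := gv s0) in *. set (t := dot d c v0).
  rewrite (@dot_propr d c v0 (gv s1) (- mu)) in H1a H1b; [|intros; apply Hv].
  rewrite (@dot_propr d (gv s1) v0 (gv s1) (- mu)) in H1b; [|intros; apply Hv].
  rewrite (@dot_propl d v0 v0 (gv s1) (- mu)) in H1b; [|intros; apply Hv].
  change (dot d c v0) with t in H0a, H0b, H1a, H1b.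
  set (n0 := dot d v0 v0) in *. set (r := gradius2 d s) in *.
  (* the distances h0, h1 from c to the two boundaries satisfy h1 = mu h0 *)
  set (h0 := gC s0 - 2 * t) in *. set (h1 := gC s1 - 2 * (- mu * t)) in *.
  assert (Hh : (h1 - mu * h0) * (h1 + mu * h0) = 0) by nra.
  assert (Hh2 : h1 = mu * h0) by (destruct (Rmult_integral _ _ Hh); nra).
  assert (Et : t = slab_level).
  { unfold slab_level, h1, h0 in *. apply (Rmult_eq_reg_l (4 * mu)); [|lra].
    field_simplify; [|lra]. lra. }
  split; auto. split; auto.
  unfold slab_radius2. rewrite -Et. fold v0 n0 h0.
  apply (Rmult_eq_reg_l (4 * n0)); [|lra]. field_simplify; [|lra]. lra.
Qed.

End Slab.

Definition bin m c r x : Prop := inR m x /\ dist2 m x c <= r.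
Definition bint m c r x : Prop := inR m x /\ dist2 m x c < r.
Definition btang m c1 c2 r : Prop :=
  exists x, bin m c1 r x /\ bin m c2 r x /\ forall y, bin m c1 r y -> bin m c2 r y -> y = x.

Lemma parallelogram m x c1 c2 : dot m (fun i => 2 * x i - c1 i - c2 i) (fun i => 2 * x i - c1 i - c2 i)
  = 2 * dist2 m x c1 + 2 * dist2 m x c2 - dist2 m c1 c2.
Proof. unfold dot, dist2; sum_induction m. Qed.

Definition lpt (c1 c2 : pt) a : pt := fun i => c1 i + a * (c2 i - c1 i).

Lemma lpt_dist1 m c1 c2 a : dist2 m (lpt c1 c2 a) c1 = a * a * dist2 m c1 c2.
Proof. unfold dist2, lpt; sum_induction m. Qed.
Lemma lpt_dist2 m c1 c2 a : dist2 m (lpt c1 c2 a) c2 = (1 - a) * (1 - a) * dist2 m c1 c2.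
Proof. unfold dist2, lpt; sum_induction m. Qed.
Lemma lpt_dist m c1 c2 a b : dist2 m (lpt c1 c2 a) (lpt c1 c2 b) = (a - b) * (a - b) * dist2 m c1 c2.
Proof. unfold dist2, lpt; sum_induction m. Qed.
Lemma lpt_inR m c1 c2 a : inR m c1 -> inR m c2 -> inR m (lpt c1 c2 a).
Proof. intros H1 H2 i Hi; unfold lpt; rewrite H1 ?H2; auto; ring. Qed.

Lemma equal_balls_disjoint m c1 c2 r : inR m c1 -> inR m c2 ->
  (forall x, ~ (bint m c1 r x /\ bint m c2 r x)) <-> 4 * r <= dist2 m c1 c2.
Proof.
  intros H1 H2. split.
  - intros H. destruct (Rlt_or_le (dist2 m c1 c2) (4 * r)) as [Hl|]; auto. exfalso.
    apply (H (lpt c1 c2 (1/2))). unfold bint. rewrite lpt_dist1 lpt_dist2.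
    pose proof (lpt_inR (1/2) H1 H2). split; split; auto; lra.
  - intros H x [[_ X1] [_ X2]]. pose proof (parallelogram m x c1 c2).
    pose proof (dot_self_nonneg m (fun i => 2 * x i - c1 i - c2 i)). lra.
Qed.

Lemma e0_norm m : (1 <= m)%coq_nat -> dot m e0 e0 = 1.
Proof.
  intros H. induction m as [|m IHm]; [lia|]. destruct m; [unfold dot, e0; simpl; ring|].
  unfold dot in *; simpl in *. rewrite IHm; [|lia]. unfold e0; simpl; ring.
Qed.

Lemma overlapping_balls_meet_twice m c1 c2 r : (1 <= m)%coq_nat -> inR m c1 -> inR m c2 -> 0 < r ->
  dist2 m c1 c2 < 4 * r ->
  exists y z, y <> z /\ bin m c1 r y /\ bin m c2 r y /\ bin m c1 r z /\ bin m c2 r z.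
Proof.
  intros Hm H1 H2 Hr HD. set (D := dist2 m c1 c2) in *.
  destruct (Rle_lt_or_eq_dec 0 D (dist2_nonneg _ _ _)) as [Dp|D0].
  - (* distinct centers: the midpoint and a nearby point of the segment *)
    set (de := (4 * r - D) / (24 * r)).
    assert (De1 : 0 < de) by (unfold de; apply Rdiv_lt_0_compat; lra).
    assert (De2 : de * (24 * r) = 4 * r - D) by (unfold de; field; lra).
    assert (De3 : de <= 1/6) by (apply (Rmult_le_reg_r (24 * r)); lra).
    assert (Near1 : (1/2 + de) * (1/2 + de) * D <= r).
    { assert (de * de * D <= de / 6 * D) by (apply Rmult_le_compat_r; nra).
      assert (de * D <= de * (4 * r)) by (apply Rmult_le_compat_l; lra). nra. }
    assert (Near2 : (1 - (1/2 + de)) * (1 - (1/2 + de)) * D <= r).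
    { assert ((1 - (1/2 + de)) * (1 - (1/2 + de)) <= 1/4) by nra.
      assert ((1 - (1/2 + de)) * (1 - (1/2 + de)) * D <= 1/4 * D) by (apply Rmult_le_compat_r; lra).
      lra. }
    exists (lpt c1 c2 (1/2)), (lpt c1 c2 (1/2 + de)).
    unfold bin. rewrite !lpt_dist1 !lpt_dist2. fold D.
    pose proof (lpt_inR (1/2) H1 H2). pose proof (lpt_inR (1/2 + de) H1 H2).
    split; [|repeat split; auto; lra].
    intros E. pose proof (lpt_dist m c1 c2 (1/2) (1/2 + de)) as Hd.
    rewrite E dist2_self in Hd. fold D in Hd.
    assert (Hpos : 0 < de * de * D) by (apply Rmult_lt_0_compat; [apply Rmult_lt_0_compat|]; lra).
    replace ((1/2 - (1/2 + de)) * (1/2 - (1/2 + de)) * D) with (de * de * D) in Hd by ring. lra.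
  - (* equal centers: the center and a point at distance t in the direction e0 *)
    assert (Ceq : forall i, lt i m -> c1 i = c2 i).
    { intros i Hi. enough (c1 i - c2 i = 0) by lra.
      apply (@dot_self_zero m (fun i => c1 i - c2 i)); auto. change (D <= 0). lra. }
    assert (Hdc : forall x, dist2 m x c2 = dist2 m x c1)
      by (intros x; apply sumR_ext; intros i Hi; rewrite Ceq; auto).
    set (t := Rmin 1 r).
    assert (Tp : 0 < t) by (unfold t; apply Rmin_pos; lra).
    assert (Tr : t * t <= r) by (pose proof (Rmin_l 1 r); pose proof (Rmin_r 1 r); unfold t in *; nra).
    set (y := fun i => c1 i + t * e0 i).
    assert (Iy : inR m y) by (intros i Hi; unfold y; rewrite H1 ?(e0_inR Hm); auto; ring).
    assert (Dy : dist2 m y c1 = t * t) by (unfold y; rewrite dist2_line e0_norm; auto; ring).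
    exists c1, y. unfold bin. rewrite !Hdc Dy dist2_self.
    repeat split; auto; try lra.
    intros E. rewrite -E dist2_self in Dy. nra.
Qed.

Lemma equal_balls_tangent m c1 c2 r : (1 <= m)%coq_nat -> inR m c1 -> inR m c2 -> 0 < r ->
  btang m c1 c2 r <-> dist2 m c1 c2 = 4 * r.
Proof.
  intros Hm H1 H2 Hr. split.
  - intros [x [[_ X1] [[_ X2] U]]].
    destruct (Rtotal_order (dist2 m c1 c2) (4 * r)) as [Hl|[Heq|Hg]]; auto; exfalso.
    + destruct (overlapping_balls_meet_twice Hm H1 H2 Hr Hl) as [y [z [Hyz [Y1 [Y2 [Z1 Z2]]]]]].
      apply Hyz. rewrite (U y Y1 Y2) (U z Z1 Z2). reflexivity.
    + pose proof (parallelogram m x c1 c2).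
      pose proof (dot_self_nonneg m (fun i => 2 * x i - c1 i - c2 i)). lra.
  - intros HD. exists (lpt c1 c2 (1/2)).
    assert (I := lpt_inR (1/2) H1 H2).
    split; [split; auto; rewrite lpt_dist1; lra|]. split; [split; auto; rewrite lpt_dist2; lra|].
    (* a common point x has |2x - c1 - c2| = 0, so it is the midpoint *)
    intros y [Y1 D1] [_ D2]. apply (inR_ext Y1 I). intros i Hi.
    pose proof (parallelogram m y c1 c2).
    assert (2 * y i - c1 i - c2 i = 0)
      by (apply (@dot_self_zero m (fun i => 2 * y i - c1 i - c2 i)); auto; lra).
    unfold lpt; lra.
Qed.

Lemma utangent_iff m c1 c2 : (1 <= m)%coq_nat -> inR m c1 -> inR m c2 ->
  utangent m c1 c2 <-> dist2 m c1 c2 = 4.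
Proof.
  intros Hm H1 H2. change (btang m c1 c2 1 <-> dist2 m c1 c2 = 4).
  rewrite equal_balls_tangent; auto; [|lra]. rewrite Rmult_1_r. tauto.
Qed.

Lemma udisjoint_iff m c1 c2 : inR m c1 -> inR m c2 ->
  (forall x, ~ (int_ubal m c1 x /\ int_ubal m c2 x)) <-> 4 <= dist2 m c1 c2.
Proof.
  intros H1 H2. change ((forall x, ~ (bint m c1 1 x /\ bint m c2 1 x)) <-> 4 <= dist2 m c1 c2).
  rewrite equal_balls_disjoint; auto. rewrite Rmult_1_r. tauto.
Qed.

Lemma dball_tangent_iff d c1 c2 r : dtangent d (DBall c1 r) (DBall c2 r) <-> btang d c1 c2 (r * r).
Proof.
  unfold dtangent, btang, bin. split.
  - intros [[x|] [H1 [H2 U]]]; simpl in *; [|contradiction].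
    exists x; split; auto; split; auto. intros y Y1 Y2.
    assert (E : Some y = Some x) by (apply U; auto). injection E; auto.
  - intros [x [H1 [H2 U]]]. exists (Some x); simpl; split; auto; split; auto.
    intros [y|] Y1 Y2; simpl in *; [f_equal; apply U; auto | contradiction].
Qed.

Lemma dball_disjoint_iff d c1 c2 r :
  (forall p, ~ (int_dball d (DBall c1 r) p /\ int_dball d (DBall c2 r) p)) <->
  (forall x, ~ (bint d c1 (r * r) x /\ bint d c2 (r * r) x)).
Proof.
  unfold bint. split.
  - intros H x Hx. apply (H (Some x)); simpl; auto.
  - intros H [x|] Hx; simpl in *; [apply (H x); auto | tauto].
Qed.

Lemma dist2_lift m x y : inR m x -> inR m y -> dist2 (S m) x y = dist2 m x y.
Proof. intros Hx Hy. change (dist2 m x y + (x m - y m) * (x m - y m) = dist2 m x y). rewrite Hx ?Hy; auto. ring. Qed.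

Definition kiss d B1 B2 : Prop :=
  dtangent d B1 B2 /\ (forall p, ~ (int_dball d B1 p /\ int_dball d B2 p)).

Lemma kiss_sym d B1 B2 : kiss d B1 B2 -> kiss d B2 B1.
Proof.
  intros [[p [H1 [H2 U]]] D]. split.
  - exists p. refine (conj H2 (conj H1 _)). intros q Q1 Q2; apply U; auto.
  - intros p' [Q1 Q2]; apply (D p'); auto.
Qed.

Lemma lifted_balls_tangent m c1 c2 : (1 <= m)%coq_nat -> inR m c1 -> inR m c2 ->
  dtangent (S m) (DBall c1 1) (DBall c2 1) <-> dist2 m c1 c2 = 4.
Proof.
  intros Hm H1 H2. rewrite dball_tangent_iff Rmult_1_r equal_balls_tangent;
    try (apply inR_S); auto; try lia; try lra.
  rewrite dist2_lift; auto. lra.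
Qed.

Lemma lifted_balls_kiss m c1 c2 : (1 <= m)%coq_nat -> inR m c1 -> inR m c2 ->
  dist2 m c1 c2 = 4 -> kiss (S m) (DBall c1 1) (DBall c2 1).
Proof.
  intros Hm H1 H2 HD. split; [apply lifted_balls_tangent; auto|].
  rewrite dball_disjoint_iff Rmult_1_r equal_balls_disjoint; try (apply inR_S); auto.
  rewrite dist2_lift; auto. lra.
Qed.

(* The half-space {sg x_m <= -1} of R^(m+1); for sg = 1, -1 these are the two
   half-spaces {x_m <= -1} and {x_m >= 1} bounding the slab around R^m. *)
Definition en (n : nat) : pt := fun i => if Nat.eqb i n then 1 else 0.
Definition slab_side m (sg : R) : dball := DHalf (fun j => sg * en m j) (-1).

Lemma en_m m : en m m = 1.
Proof. unfold en; rewrite Nat.eqb_refl; auto. Qed.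

Lemma en_inR m : inR (S m) (en m).
Proof. intros i Hi. unfold en. destruct (Nat.eqb_spec i m); [lia|auto]. Qed.

Lemma dot_en n x : dot (S n) x (en n) = x n.
Proof.
  unfold dot; simpl. rewrite (@sumR_ext n _ (fun _ => 0)).
  - rewrite en_m sumR_zero. ring.
  - intros i Hi. unfold en. destruct (Nat.eqb_spec i n); [lia|ring].
Qed.

Lemma slab_side_dot m sg x : dot (S m) (fun j => sg * en m j) x = sg * x m.
Proof. rewrite (@dot_propl (S m) x (en m) (fun j => sg * en m j) sg) // dot_sym dot_en //. Qed.

Lemma slab_side_valid m sg : sg <> 0 -> valid_dball (S m) (slab_side m sg).
Proof.
  intros H. split; [intros i Hi; rewrite en_inR; auto; ring|].
  exists m. split; [lia|]. rewrite en_m Rmult_1_r; auto.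
Qed.

(* The two sides of the slab kiss at infinity. *)
Lemma slab_sides_kiss m : kiss (S m) (slab_side m 1) (slab_side m (-1)).
Proof.
  split.
  - exists None; simpl; split; auto; split; auto.
    intros [x|] Q1 Q2; [|reflexivity]. destruct Q1 as [_ Q1]; destruct Q2 as [_ Q2].
    rewrite !slab_side_dot in Q1 Q2. lra.
  - intros [x|] [Q1 Q2]; simpl in *; [|auto]. destruct Q1 as [_ Q1]; destruct Q2 as [_ Q2].
    rewrite !slab_side_dot in Q1 Q2. lra.
Qed.

Lemma slab_side_ball_kiss m sg c : (sg = 1 \/ sg = -1) -> inR m c -> kiss (S m) (slab_side m sg) (DBall c 1).
Proof.
  intros Hs Hc. assert (S2 : sg * sg = 1) by (destruct Hs; subst; ring).
  assert (Cm : c m = 0) by (apply Hc; lia).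
  assert (Ic := inR_S Hc).
  split.
  - (* the point of contact is c - sg e_m *)
    set (xs := fun i => c i + (- sg) * en m i).
    assert (Ix : inR (S m) xs) by (intros i Hi; unfold xs; rewrite Ic ?en_inR; auto; ring).
    exists (Some xs). simpl. split; [split; auto; rewrite slab_side_dot; unfold xs; rewrite Cm en_m; nra|].
    split; [split; auto; unfold xs; rewrite dist2_line dot_en en_m; nra|].
    intros [x|] Q1 Q2; [|contradiction]. destruct Q1 as [Ix' Q1]; destruct Q2 as [_ Q2].
    rewrite slab_side_dot in Q1. change (dist2 m x c + (x m - c m) * (x m - c m) <= 1 * 1) in Q2.
    rewrite Cm in Q2. pose proof (dist2_nonneg m x c).
    assert (Xm : x m = - sg) by nra.
    assert (Dz : dist2 m x c <= 0) by nra.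
    f_equal. apply (inR_ext Ix' Ix). intros i Hi. unfold xs.
    destruct (Nat.eq_dec i m) as [->|Hne]; [rewrite Cm en_m Xm; ring|].
    assert (x i - c i = 0) by (apply (@dot_self_zero m (fun i => x i - c i)); auto; lia).
    unfold en. destruct (Nat.eqb_spec i m); [lia|]. lra.
  - intros [x|] [Q1 Q2]; simpl in *; [|auto]. destruct Q1 as [_ Q1]; destruct Q2 as [_ Q2].
    rewrite slab_side_dot in Q1. change (dist2 m x c + (x m - c m) * (x m - c m) < 1 * 1) in Q2.
    rewrite Cm in Q2. pose proof (dist2_nonneg m x c). nra.
Qed.

(* Given an (m, alpha)-kissing
   configuration with fixed centers F k and centers C v, place everything on
   R^m inside R^(m+1): the two sides of the slab {|x_m| <= 1} realize two
   vertices of K_(2+alpha), the fixed unit balls the remaining alpha ones, and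
   the configuration balls the vertices of G. *)
Section KissingToPacking.
Variables (m alpha : nat) (V : finType) (adj : rel V) (F : nat -> pt) (C : V -> pt).
Hypotheses (Hm : (1 <= m)%coq_nat)
  (HF : forall i, lt i alpha -> inR m (F i))
  (HFt : forall i j, lt i alpha -> lt j alpha -> i <> j -> utangent m (F i) (F j))
  (HC : forall v, inR m (C v))
  (HCd : forall u v, u <> v -> forall x, ~ (int_ubal m (C u) x /\ int_ubal m (C v) x))
  (HCF : forall v i, lt i alpha -> utangent m (C v) (F i))
  (Hadj : forall u v, adj u v <-> (u <> v /\ utangent m (C u) (C v))).

Definition join_packing (x : ('I_(2 + alpha) + V)%type) : dball :=
  match x with
  | inl i => if Nat.eqb i 0 then slab_side m 1
             else if Nat.eqb i 1 then slab_side m (-1) else DBall (F (i - 2)%coq_nat) 1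
  | inr v => DBall (C v) 1
  end.

Lemma join_packing_clique (i : 'I_(2 + alpha)) :
  (nat_of_ord i = 0%N /\ join_packing (inl i) = slab_side m 1) \/
  (nat_of_ord i = 1%N /\ join_packing (inl i) = slab_side m (-1)) \/
  ((2 <= i)%coq_nat /\ lt (i - 2)%coq_nat alpha /\ join_packing (inl i) = DBall (F (i - 2)%coq_nat) 1).
Proof.
  have Hi := ltn_ord i. simpl.
  destruct (Nat.eqb_spec i 0) as [E|E]; [left; auto|].
  destruct (Nat.eqb_spec i 1) as [E1|E1]; [right; left; auto|].
  right; right. repeat split; auto; lia.
Qed.

Lemma slab_sides_ball_kiss sg c : (sg = 1 \/ sg = -1) -> inR m c ->
  kiss (S m) (slab_side m sg) (DBall c 1) /\ kiss (S m) (DBall c 1) (slab_side m sg).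
Proof. intros Hs Hc. split; [|apply kiss_sym]; apply slab_side_ball_kiss; auto. Qed.

Lemma join_packing_valid x : valid_dball (S m) (join_packing x).
Proof.
  destruct x as [i|v].
  - destruct (join_packing_clique i) as [[_ ->]|[[_ ->]|[_ [Hi ->]]]];
      [apply slab_side_valid; lra | apply slab_side_valid; lra |].
    split; [apply inR_S, HF; auto | lra].
  - split; [apply inR_S, HC | simpl; lra].
Qed.

Lemma clique_kiss (i j : 'I_(2 + alpha)) : i <> j -> kiss (S m) (join_packing (inl i)) (join_packing (inl j)).
Proof.
  intros Hij. assert (Hv : nat_of_ord i <> nat_of_ord j) by (intros E; apply Hij; apply val_inj; auto).
  destruct (join_packing_clique i) as [[Ei ->]|[[Ei ->]|[Ei1 [Ei2 ->]]]];
  destruct (join_packing_clique j) as [[Ej ->]|[[Ej ->]|[Ej1 [Ej2 ->]]]]; try lia;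
  try (apply slab_sides_ball_kiss; auto; lra).
  - apply slab_sides_kiss.
  - apply kiss_sym, slab_sides_kiss.
  - apply lifted_balls_kiss; auto. apply utangent_iff; auto. apply HFt; auto. lia.
Qed.

Lemma clique_graph_kiss (i : 'I_(2 + alpha)) v : kiss (S m) (join_packing (inl i)) (join_packing (inr v)).
Proof.
  destruct (join_packing_clique i) as [[_ ->]|[[_ ->]|[_ [Hi ->]]]]; simpl;
    try (apply slab_sides_ball_kiss; auto; lra).
  apply lifted_balls_kiss; auto. rewrite dist2_sym. apply utangent_iff; auto.
Qed.

Lemma graph_balls u v : u <> v ->
  (forall p, ~ (int_dball (S m) (join_packing (inr u)) p /\ int_dball (S m) (join_packing (inr v)) p)) /\
  (adj u v <-> dtangent (S m) (join_packing (inr u)) (join_packing (inr v))).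
Proof.
  intros Huv. simpl. split.
  - rewrite dball_disjoint_iff Rmult_1_r equal_balls_disjoint; try apply inR_S; auto.
    rewrite dist2_lift // Rmult_1_r. apply udisjoint_iff; auto.
  - rewrite Hadj lifted_balls_tangent // -utangent_iff //. tauto.
Qed.

Lemma join_packing_realizes : irreflexive adj -> ball_packable (S m) (@join_adj (2 + alpha) V adj).
Proof.
  intros Hirr. exists join_packing. split; [split|].
  - exact join_packing_valid.
  - intros [i|u] [j|v] Hne.
    + apply clique_kiss. congruence.
    + apply clique_graph_kiss.
    + intros p [P1 P2]. exact (proj2 (clique_graph_kiss j u) p (conj P2 P1)).
    + apply graph_balls. congruence.
  - intros [i|u] [j|v]; simpl.
    + case: (eqVneq i j) => [<-|Hne]; [split; [discriminate | tauto]|].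
      split; [intros _ | auto]. assert (i <> j) by (apply/eqP; exact Hne).
      split; [congruence | apply clique_kiss; auto].
    + split; [intros _; split; [discriminate | apply clique_graph_kiss] | auto].
    + split; [intros _; split; [discriminate | apply kiss_sym, clique_graph_kiss] | auto].
    + case: (eqVneq u v) => [<-|Hne]; [rewrite Hirr; split; [discriminate | tauto]|].
      assert (Huv : u <> v) by (apply/eqP; exact Hne).
      rewrite (proj2 (graph_balls Huv)). split; [intros H; split; auto; congruence | tauto].
Qed.

End KissingToPacking.

Lemma kissing_to_packable m alpha (V : finType) (adj : rel V) : (1 <= m)%coq_nat -> irreflexive adj ->
  kissing_graph m alpha adj -> ball_packable (S m) (@join_adj (2 + alpha) V adj).
Proof.
  intros Hm Hirr [F [C [HF [HFt [HC [HCd [HCF Hadj]]]]]]].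
  exact (join_packing_realizes Hm HF HFt HC HCd HCF Hadj Hirr).
Qed.

Definition scaled_chart n (v0 : pt) (rho : R) (P : pt -> pt) : Prop :=
  (forall c, inR n (P c)) /\
  forall c c', dot (S n) c v0 = dot (S n) c' v0 -> dist2 n (P c) (P c') * rho = dist2 (S n) c c'.

Lemma sum_scale_sq n a b s : s <> 0 ->
  sumR n (fun i => (a i / s - b i / s) * (a i / s - b i / s)) * (s * s)
  = sumR n (fun i => (a i - b i) * (a i - b i)).
Proof. intros Hs. induction n; simpl; [ring|]. rewrite Rmult_plus_distr_r IHn. field; auto. Qed.

(* A linear isometry H of R^(n+1) sending v0^perp into R^n yields a chart:
   keep the first n coordinates of H, divided by sqrt rho. *)
Lemma chart_of_isometry n H v0 rho : 0 < rho ->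
  (forall x y i, H x i - H y i = H (fun j => x j - y j) i) ->
  (forall z, dot (S n) (H z) (H z) = dot (S n) z z) ->
  (forall z, dot (S n) z v0 = 0 -> H z n = 0) ->
  exists P, scaled_chart n v0 rho P.
Proof.
  intros Hr Hlin Hn Hb.
  set (s := sqrt rho). assert (Ss : s * s = rho) by (apply sqrt_sqrt; lra).
  assert (Sp : 0 < s) by (apply sqrt_lt_R0; lra).
  exists (fun c i => if Nat.ltb i n then H c i / s else 0). split.
  - intros c i Hi. destruct (Nat.ltb_spec i n); [lia|auto].
  - intros c c' E. unfold dist2.
    rewrite (@sumR_ext n _ (fun i => (H c i / s - H c' i / s) * (H c i / s - H c' i / s))).
    2: { intros i Hi. destruct (Nat.ltb_spec i n); [auto|lia]. }
    rewrite -Ss sum_scale_sq; [|lra].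
    set (z := fun j => c j - c' j).
    assert (Hzn : H z n = 0) by (apply Hb; unfold z; rewrite dot_sub; lra).
    assert (Hz2 : sumR n (fun i => H z i * H z i) = sumR (S n) (fun i => z i * z i)).
    { pose proof (Hn z) as Hz. unfold dot in Hz. rewrite -Hz. simpl. rewrite Hzn. ring. }
    change (sumR (S n) (fun i => (c i - c' i) * (c i - c' i))) with (sumR (S n) (fun i => z i * z i)).
    rewrite -Hz2. apply sumR_ext. intros i _. rewrite Hlin. reflexivity.
Qed.

(* Every family of parallel hyperplanes of R^(n+1) has a chart at any scale:
   use the Householder reflection exchanging v0/|v0| and the last basis vector. *)
Lemma hyperplane_chart n v0 rho : inR (S n) v0 -> 0 < dot (S n) v0 v0 -> 0 < rho ->
  exists P, scaled_chart n v0 rho P.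
Proof.
  intros Iv Pv Hr. set (n0 := dot (S n) v0 v0) in *.
  set (k0 := sqrt n0). assert (Kk : k0 * k0 = n0) by (unfold k0; apply sqrt_sqrt; lra).
  assert (Kp : 0 < k0) by (unfold k0; apply sqrt_lt_R0; lra).
  set (w := fun i => v0 i - k0 * en n i).
  set (W := dot (S n) w w).
  assert (Een : dot (S n) (en n) (en n) = 1) by (rewrite dot_en en_m; reflexivity).
  assert (Vw : dot (S n) v0 w = n0 - k0 * v0 n) by (unfold w; rewrite dot_sub_scalr dot_en; reflexivity).
  assert (EW : W = 2 * (n0 - k0 * v0 n)).
  { unfold W, w. rewrite (dot_shift (S n) v0 v0 (en n) k0 k0) Een dot_en (dot_sym _ (en n) v0) dot_en.
    fold n0. nra. }
  destruct (Req_EM_T W 0) as [W0|W0].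
  - (* v0 is already a positive multiple of the last basis vector *)
    apply (@chart_of_isometry n (fun x => x) v0 rho); auto.
    intros z Hz.
    assert (Hw : forall i, lt i (S n) -> w i = 0) by (apply dot_self_zero; fold W; lra).
    rewrite (@dot_propr (S n) z (en n) v0 k0) in Hz.
    + rewrite dot_en in Hz. nra.
    + intros i Hi. pose proof (Hw i Hi). unfold w in H. lra.
  - set (H := fun (x : pt) i => x i - (2 * dot (S n) x w / W) * w i).
    assert (HD : forall x y, dot (S n) (H x) (H y) = dot (S n) x y).
    { intros x y. unfold H. rewrite dot_shift. fold W. rewrite (dot_sym _ w y). field. auto. }
    apply (@chart_of_isometry n H v0 rho); auto.
    + intros x y i. unfold H. rewrite dot_sub. field. auto.
    + (* H v0 = k0 e_n, so H maps v0^perp into e_n^perp *)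
      intros z Hz. rewrite -(HD z v0) in Hz.
      rewrite (@dot_propr (S n) (H z) (en n) (H v0) k0) in Hz.
      * rewrite dot_en in Hz. nra.
      * intros i Hi. unfold H. rewrite Vw.
        replace (2 * (n0 - k0 * v0 n) / W) with 1 by (rewrite EW; field; lra).
        unfold w. ring.
Qed.

Lemma gball_sets d s p : 0 < gA s ->
  (gin d s p <-> match p with Some x => bin d (gcenter s) (gradius2 d s) x | None => False end) /\
  (gint d s p <-> match p with Some x => bint d (gcenter s) (gradius2 d s) x | None => False end).
Proof.
  intros Ha. destruct p as [x|]; simpl; [|split; split; intros; try contradiction; lra].
  unfold bin, bint. rewrite gform_ball; [|lra]. split; split; intros [H1 H2]; split; auto; nra.
Qed.

Lemma gballs_tangent_disjoint d s1 s2 r : 0 < gA s1 -> 0 < gA s2 -> gradius2 d s1 = r -> gradius2 d s2 = r ->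
  (gtangent d s1 s2 <-> btang d (gcenter s1) (gcenter s2) r) /\
  (gdisjoint d s1 s2 <-> forall x, ~ (bint d (gcenter s1) r x /\ bint d (gcenter s2) r x)).
Proof.
  intros A1 A2 R1 R2.
  assert (S1 := fun p => gball_sets d p A1). assert (S2 := fun p => gball_sets d p A2).
  rewrite R1 in S1. rewrite R2 in S2. unfold gtangent, btang, gdisjoint. split; split.
  - intros [[x|] [H1 [H2 U]]]; [|apply (S1 None) in H1; contradiction].
    apply (S1 (Some x)) in H1. apply (S2 (Some x)) in H2. exists x; split; auto; split; auto.
    intros y Y1 Y2. assert (E : Some y = Some x); [|congruence].
    apply U; [apply (S1 (Some y)) | apply (S2 (Some y))]; auto.
  - intros [x [H1 [H2 U]]]. exists (Some x). split; [apply (S1 (Some x)); auto|].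
    split; [apply (S2 (Some x)); auto|].
    intros [y|] Y1 Y2; [|apply (S1 None) in Y1; contradiction].
    apply (S1 (Some y)) in Y1. apply (S2 (Some y)) in Y2. f_equal; apply U; auto.
  - intros H x [X1 X2]. apply (H (Some x)). split; [apply (S1 (Some x)) | apply (S2 (Some x))]; auto.
  - intros H [x|] [X1 X2]; [|apply (S1 None) in X1; auto].
    apply (H x). split; [apply (S1 (Some x)) in X1 | apply (S2 (Some x)) in X2]; auto.
Qed.

(* Normal form of a packing containing two tangent balls B x0, B x1: after the
   Moebius map sending their point of contact to infinity, every ball tangent
   to both becomes a ball of one common radius centered on one hyperplane. *)
Lemma slab_normal_form d (W : Type) (B : W -> dball) (x0 x1 : W) :
  (1 <= d)%coq_nat -> dpacking d B -> x0 <> x1 -> dtangent d (B x0) (B x1) ->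
  exists (Q : W -> gsphere) (v0 : pt) (T0 R0 : R),
    inR d v0 /\ 0 < dot d v0 v0 /\ (forall y, gvalid d (Q y)) /\
    (forall y z, y <> z -> gdisjoint d (Q y) (Q z)) /\
    (forall y z, gtangent d (Q y) (Q z) <-> dtangent d (B y) (B z)) /\
    (forall y, y <> x0 -> y <> x1 -> dtangent d (B y) (B x0) -> dtangent d (B y) (B x1) ->
       0 < gA (Q y) /\ dot d (gcenter (Q y)) v0 = T0 /\ gradius2 d (Q y) = R0).
Proof.
  intros Hd [Bv Bd] H01 [p [P0 [P1 _]]].
  rewrite (proj1 (gsphere_of_sets d (B x0) p)) in P0.
  rewrite (proj1 (gsphere_of_sets d (B x1) p)) in P1.
  assert (Vp : vpt d p) by exact (gin_vpt P0).
  set (Q := fun y => to_infinity d p (gsphere_of d (B y))).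
  assert (QV : forall y, gvalid d (Q y)) by (intros y; apply to_infinity_valid, gsphere_of_valid; auto).
  assert (QD : forall y z, y <> z -> gdisjoint d (Q y) (Q z)).
  { intros y z Hyz. apply (proj2 (to_infinity_preserves Vp _ _)), gsphere_of_disjoint, Bd; auto. }
  assert (QT : forall y z, gtangent d (Q y) (Q z) <-> dtangent d (B y) (B z)).
  { intros y z. rewrite (proj1 (to_infinity_preserves Vp _ _)) gsphere_of_tangent. tauto. }
  destruct (disjoint_through_infinity Hd (QV x0) (QV x1) (to_infinity_through P0) (to_infinity_through P1)
    (QD _ _ H01)) as [A0 [A1 [mu [Mu Hmu]]]].
  exists Q, (gv (Q x0)), (slab_level (Q x0) (Q x1) mu), (slab_radius2 d (Q x0) (Q x1) mu).
  split; [apply (QV x0)|]. split; [destruct (QV x0) as [_ Pq]; rewrite A0 in Pq; lra|].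
  do 3 (split; auto).
  intros y N0 N1 T0 T1.
  apply (inside_slab_ball (QV x0) (QV x1) A0 A1 Mu Hmu Hd (QV y)); try apply QD; auto; apply QT; auto.
Qed.

Lemma chart_unit_balls m v0 T0 R0 P s1 s2 : (1 <= m)%coq_nat -> scaled_chart m v0 R0 P ->
  gvalid (S m) s1 -> gvalid (S m) s2 -> 0 < gA s1 -> 0 < gA s2 ->
  dot (S m) (gcenter s1) v0 = T0 -> dot (S m) (gcenter s2) v0 = T0 ->
  gradius2 (S m) s1 = R0 -> gradius2 (S m) s2 = R0 ->
  (gtangent (S m) s1 s2 <-> utangent m (P (gcenter s1)) (P (gcenter s2))) /\
  (gdisjoint (S m) s1 s2 -> forall x, ~ (int_ubal m (P (gcenter s1)) x /\ int_ubal m (P (gcenter s2)) x)).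
Proof.
  intros Hm [PI Pd] V1 V2 A1 A2 D1 D2 R1 R2.
  assert (R0p : 0 < R0) by (rewrite -R1; apply gradius2_pos; auto; lra).
  assert (E := Pd (gcenter s1) (gcenter s2) ltac:(rewrite D1 D2; auto)).
  assert (I1 : inR (S m) (gcenter s1)) by apply gcenter_inR, V1.
  assert (I2 : inR (S m) (gcenter s2)) by apply gcenter_inR, V2.
  destruct (gballs_tangent_disjoint A1 A2 R1 R2) as [TB DB].
  rewrite TB equal_balls_tangent ?utangent_iff; auto; try lia. split.
  - rewrite -E. split; intros; nra.
  - rewrite DB equal_balls_disjoint ?udisjoint_iff; auto. rewrite -E. intros; nra.
Qed.

Definition kvert alpha (V : Type) (k : nat) : ('I_(2 + alpha) + V)%type := inl (inord k).

Lemma kvert_neq alpha V k l : (k < 2 + alpha)%coq_nat -> (l < 2 + alpha)%coq_nat -> k <> l ->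
  kvert alpha V k <> kvert alpha V l.
Proof.
  intros Hk Hl Hkl E. injection E => /(f_equal (@nat_of_ord _)).
  rewrite !inordK; [lia | |]; apply/ltP; simpl; lia.
Qed.

Lemma join_adj_clique alpha (V : Type) (adj : V -> V -> bool) y j :
  y <> inl j -> @join_adj (2 + alpha) V adj y (inl j).
Proof. destruct y as [i|v]; simpl; [intros H; apply/eqP; congruence | auto]. Qed.

Lemma packable_to_kissing m alpha (V : finType) (adj : rel V) : (1 <= m)%coq_nat -> (1 <= alpha)%N ->
  ball_packable (S m) (@join_adj (2 + alpha) V adj) -> kissing_graph m alpha adj.
Proof.
  intros Hm Ha [B [HB Badj]].
  set (x0 := kvert alpha V 0). set (x1 := kvert alpha V 1).
  assert (H01 : x0 <> x1) by (apply kvert_neq; lia).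
  destruct (proj1 (Badj x0 x1) (join_adj_clique adj H01)) as [_ T01].
  destruct (@slab_normal_form (S m) _ B x0 x1 ltac:(lia) HB H01 T01)
    as [Q [v0 [T0 [R0 [Iv0 [Nv0 [QV [QD [QT QK]]]]]]]]].
  (* the balls other than B x0, B x1 are tangent to both, hence normalized *)
  set (other := fun y => y <> x0 /\ y <> x1).
  assert (Normal : forall y, other y -> 0 < gA (Q y) /\ dot (S m) (gcenter (Q y)) v0 = T0 /\ gradius2 (S m) (Q y) = R0).
  { intros y [N0 N1]. apply QK; auto; apply Badj, join_adj_clique; auto. }
  assert (Other2 : other (kvert alpha V 2)) by (split; apply kvert_neq; lia).
  assert (R0p : 0 < R0).
  { destruct (Normal _ Other2) as [Ap [_ Hr]]. rewrite -Hr. apply gradius2_pos; auto. lra. }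
  destruct (hyperplane_chart Iv0 Nv0 R0p) as [P HP].
  set (c := fun y => P (gcenter (Q y))).
  assert (Unit : forall y z, other y -> other z ->
    (dtangent (S m) (B y) (B z) <-> utangent m (c y) (c z)) /\
    (y <> z -> forall x, ~ (int_ubal m (c y) x /\ int_ubal m (c z) x))).
  { intros y z Hy Hz. destruct (Normal y Hy) as [Ay [Dy Ry]]. destruct (Normal z Hz) as [Az [Dz Rz]].
    destruct (chart_unit_balls Hm HP (QV y) (QV z) Ay Az Dy Dz Ry Rz) as [Ht Hd].
    rewrite -QT. split; auto. }
  assert (OtherK : forall k, lt k alpha -> other (kvert alpha V (2 + k))) by (split; apply kvert_neq; lia).
  assert (OtherG : forall v, other (inr v)) by (split; discriminate).
  exists (fun k => c (kvert alpha V (2 + k))), (fun v => c (inr v)).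
  split; [intros; apply HP|]. split.
  { intros i j Hi Hj Hij. apply (Unit _ _ (OtherK i Hi) (OtherK j Hj)), Badj, join_adj_clique.
    apply kvert_neq; lia. }
  split; [intros; apply HP|]. split.
  { intros u v Huv. apply (Unit _ _ (OtherG u) (OtherG v)). congruence. }
  split.
  { intros v i Hi. apply (Unit _ _ (OtherG v) (OtherK i Hi)), Badj, join_adj_clique. discriminate. }
  intros u v. rewrite -(proj1 (Unit _ _ (OtherG u) (OtherG v))).
  change (adj u v) with (@join_adj (2 + alpha) V adj (inr u) (inr v)).
  rewrite Badj. split; intros [H1 H2]; split; auto; congruence.
Qed.

Theorem theorem3p4 (d alpha : nat) (V : finType) (adj : rel V) :
  (2 <= d)%N -> (1 <= alpha)%N -> symmetric adj -> irreflexive adj ->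
  (ball_packable d (@join_adj (2 + alpha) V adj) <-> kissing_graph (d - 1) alpha adj).
Proof.
  intros Hd Ha _ Hirr. destruct d as [|[|m]]; try discriminate.
  have -> : (m.+2 - 1)%N = m.+1 by lia.
  split; [apply packable_to_kissing | apply kissing_to_packable]; auto; lia.
Qed.
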